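(* Suppose that a pair $(\mathfrak m,\mathfrak m^* )$ of functions on the edges of the lattice strip is ICSH and has ICRBV. Then for every $y\in\mathbb Z$, $$\int_{\gamma_y}\big(\mathfrak m(z)\psi(z)\,dz+\mathfrak m^*(z)\psi^*(z)\,d\bar z\big)=\int_{\gamma_0}\big(\mathfrak m(z)\psi(z)\,dz+\mathfrak m^*(z)\psi^*(z)\,d\bar z\big).$$
   Context: Fix integers $a<0<b$, $C=\{a,\dots,b\}$, $C^*=\{a+\frac12,\dots,b-\frac12\}$. $\tilde V$ has orthonormal basis $(e_\rho)_{\rho\in\{\pm1\}^C}$. For $x'\in C^*$, $\varsigma_{x'}(\rho)$ flips the signs of $\rho_x$ for $x<x'$; $\psi_{x'}e_\rho=\frac{-\rho_{x'-1/2}+i\rho_{x'+1/2}}{\sqrt2}e_{\varsigma_{x'}(\rho)}$, $\psi^*_{x'}e_\rho=\frac{-i\rho_{x'-1/2}+\rho_{x'+1/2}}{\sqrt2}e_{\varsigma_{x'}(\rho)}$; $\mathrm{CliffGen}$ is their span. With $\beta=\frac12\log(\sqrt2+1)$: $T_h^{1/2}$ diagonal with entries $\exp(\frac\beta2\sum_{x=a}^{b-1}\rho_x\rho_{x+1})$, $e_\tau^\dagger T_ve_\rho=\exp(\beta\sum_{x=a}^b\rho_x\tau_x)\delta_{\tau_a\rho_a}\delta_{\tau_b\rho_b}$, $T=T_h^{1/2}T_vT_h^{1/2}$. The lattice strip: vertices $C\times\mathbb Z\subset\mathbb C$, nearest-neighbour edges $E$ identified with midpoints, faces with centres $p$; vertical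 edges $a+iy'$ / $b+iy'$ ($y'\in\mathbb Z+\frac12$) are left / right boundary edges. The fermions $\psi,\psi^*:E\to\mathrm{CliffGen}$ are the unique functions with $\psi(x'+iy)=T^{-y}\psi_{x'}T^y$, $\psi^*(x'+iy)=T^{-y}\psi^*_{x'}T^y$ on horizontal edges, such that for edges $z_1,z_2$ adjacent to a common vertex $v$ and face $p$, $\psi(z_1)+\frac{i|v-p|}{v-p}\psi^*(z_1)=\psi(z_2)+\frac{i|v-p|}{v-p}\psi^*(z_2)$, and $\psi(L)+i\psi^*(L)=0$, $\psi(R)-i\psi^*(R)=0$ on left/right boundary edges. For a contour $(w_0,\dots,w_m)$ with $z_j$ the edge joining $w_{j-1},w_j$: $\int(\mathfrak m\psi\,dz+\mathfrak m^*\psi^*\,d\bar z)=\sum_j(\mathfrak m(z_j)\psi(z_j)(w_j-w_{j-1})+\mathfrak m^*(z_j)\psi^*(z_j)\overline{(w_j-w_{j-1})})$. $\gamma_y=(a+iy,a+1+iy,\dots,b+iy)$. ICSH: for edges $z_1,z_2$ adjacent to a common vertex $v$ and face $p$, $\mathfrak m(z_1)-\frac{i|v-p|}{v-p}\mathfrak m^*(z_1)=\mathfrak m(z_2)-\frac{i|v-p|}{v-p}\mathfrak m^*(z_2)$. ICRBV: $\mathfrak m(L)-i\mathfrak m^*(L)=0$ and $\mathfrak m(R)+i\mathfrak m^*(R)=0$ on all left/right boundary edges $L,R$. *)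

From mathcomp Require Import all_boot all_order all_algebra.
From mathcomp Require Import reals sequences exp.
From mathcomp Require Export complex.
Set Implicit Arguments. Unset Strict Implicit. Unset Printing Implicit Defensive.
Import Order.TTheory GRing.Theory Num.Theory.
Local Open Scope ring_scope.
Local Open Scope complex_scope.

(* site index i : 'I_(b-a+1) represents x = a + i *)
Definition Sites (a b : int) := 'I_(absz (b - a)).+1.
(* rho : {+-1}^C, with true = +1, false = -1 *)
Definition Config (a b : int) := {ffun Sites a b -> bool}.

Definition site (a b : int) (x : int) : Sites a b := inord (absz (x - a)).

Definition spin (R : realType) (a b : int) (rho : Config a b) (x : int) : R :=
  if rho (site a b x) then 1 else -1.

(* dimension of tilde V, with orthonormal basis (e_rho) *)
Definition dimV (a b : int) := #|{: Config a b}|.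

(* operators on tilde V, as matrices in the basis (e_rho): the entry at
   (rank tau, rank rho) is e_tau^dagger A e_rho *)
Definition Op (R : realType) (a b : int) := 'M[R[i]]_(dimV a b).

Definition mkop (R : realType) (a b : int)
  (f : Config a b -> Config a b -> R[i]) : Op R a b :=
  \matrix_(i, j) f (enum_val i) (enum_val j).

Definition isum (R : realType) (lo hi : int) (F : int -> R) : R :=
  \sum_(k < (absz (hi - lo)).+1) F (lo + k%:Z).

(* varsigma_{x'} with x' = j + 1/2 : flips rho_x for all x < x', i.e. x <= j *)
Definition flip (a b : int) (j : int) (rho : Config a b) : Config a b :=
  [ffun i : Sites a b => if (a + (i : nat)%:Z <= j)%R then ~~ rho i else rho i].

Definition sqrt2C (R : realType) : R[i] := (Num.sqrt (2 : R))%:C.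

(* psi_{x'} and psi^*_{x'} for x' = j + 1/2 *)
Definition psiC (R : realType) (a b : int) (j : int) : Op R a b :=
  mkop (fun tau rho => if tau == flip j rho then
      ((- spin R rho j)%:C + 'i * (spin R rho (j + 1))%:C) / sqrt2C R
    else 0).

Definition psisC (R : realType) (a b : int) (j : int) : Op R a b :=
  mkop (fun tau rho => if tau == flip j rho then
      (- 'i * (spin R rho j)%:C + (spin R rho (j + 1))%:C) / sqrt2C R
    else 0).

Definition beta (R : realType) : R := ln (Num.sqrt (2 : R) + 1) / 2.

Definition Th_half (R : realType) (a b : int) : Op R a b :=
  mkop (fun tau rho => if tau == rho then
     (expR (beta R / 2 * isum a (b - 1) (fun x => spin R rho x * spin R rho (x + 1))))%:C
   else 0).

Definition Tv (R : realType) (a b : int) : Op R a b :=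
  mkop (fun tau rho =>
     (expR (beta R * isum a b (fun x => spin R rho x * spin R tau x)))%:C
     * (spin R tau a == spin R rho a)%:R * (spin R tau b == spin R rho b)%:R).

Definition Tmat (R : realType) (a b : int) : Op R a b :=
  Th_half R a b *m Tv R a b *m Th_half R a b.

Definition mxpowz (F : fieldType) (n : nat) (A : 'M[F]_n) (k : int) : 'M[F]_n :=
  match k with
  | Posz m => iter m (mulmx A) 1%:M
  | Negz m => iter m.+1 (mulmx (invmx A)) 1%:M
  end.

(* a point (X, Y) : int * int stands for X/2 + i Y/2.                 *)

Definition hpt (R : realType) (z : int * int) : R[i] :=
  (z.1%:~R / 2) +i* (z.2%:~R / 2).

Definition oddz (X : int) : bool := odd (absz X).

Definition is_vertex (a b : int) (z : int * int) : bool :=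
  [&& (2 * a <= z.1)%R, (z.1 <= 2 * b)%R, ~~ oddz z.1 & ~~ oddz z.2].

Definition is_edge (a b : int) (z : int * int) : bool :=
  [&& (2 * a <= z.1)%R, (z.1 <= 2 * b)%R & oddz z.1 != oddz z.2].

Definition is_face (a b : int) (z : int * int) : bool :=
  [&& (2 * a < z.1)%R, (z.1 < 2 * b)%R, oddz z.1 & oddz z.2].

(* an edge is adjacent to a vertex / face iff their distance is 1/2 *)
Definition adj (z w : int * int) : bool :=
  (absz (z.1 - w.1) + absz (z.2 - w.2) == 1)%N.

Definition lam (R : realType) (v p : int * int) : R[i] :=
  'i * `|hpt R v - hpt R p| / (hpt R v - hpt R p).

Definition left_bdry (a b : int) (z : int * int) : bool := (z.1 == 2 * a) && oddz z.2.
Definition right_bdry (a b : int) (z : int * int) : bool := (z.1 == 2 * b) && oddz z.2.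

Definition is_fermion (R : realType) (a b : int)
  (psi psis : int * int -> Op R a b) : Prop :=
  (forall j y : int, (a <= j)%R -> (j < b)%R ->
      psi (2 * j + 1, 2 * y)%R = mxpowz (Tmat R a b) (- y) *m psiC R a b j *m mxpowz (Tmat R a b) y
   /\ psis (2 * j + 1, 2 * y)%R = mxpowz (Tmat R a b) (- y) *m psisC R a b j *m mxpowz (Tmat R a b) y)
  /\ (forall z1 z2 v p, is_edge a b z1 -> is_edge a b z2 -> is_vertex a b v -> is_face a b p ->
       adj z1 v -> adj z1 p -> adj z2 v -> adj z2 p ->
       psi z1 + lam R v p *: psis z1 = psi z2 + lam R v p *: psis z2)
  /\ (forall z, left_bdry a b z -> psi z + 'i *: psis z = 0)
  /\ (forall z, right_bdry a b z -> psi z - 'i *: psis z = 0).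

Definition ICSH (R : realType) (a b : int) (m ms : int * int -> R[i]) : Prop :=
  forall z1 z2 v p, is_edge a b z1 -> is_edge a b z2 -> is_vertex a b v -> is_face a b p ->
    adj z1 v -> adj z1 p -> adj z2 v -> adj z2 p ->
    m z1 - lam R v p * ms z1 = m z2 - lam R v p * ms z2.

Definition ICRBV (R : realType) (a b : int) (m ms : int * int -> R[i]) : Prop :=
  (forall z, left_bdry a b z -> m z - 'i * ms z = 0)
  /\ (forall z, right_bdry a b z -> m z + 'i * ms z = 0).

(* Discrete contour integrals. A contour is a list of vertices given  *)
(* in plain integer coordinates (x, y) ~ x + i y; the edge z_j joining *)
(* w_{j-1}, w_j has doubled coordinates w_{j-1} + w_j.                 *)

Definition vpt (R : realType) (w : int * int) : R[i] := (w.1%:~R) +i* (w.2%:~R).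

Definition cint (R : realType) (a b : int) (m ms : int * int -> R[i])
  (psi psis : int * int -> Op R a b) (ws : seq (int * int)) : Op R a b :=
  \sum_(e <- zip ws (behead ws))
     let z := (e.1.1 + e.2.1, e.1.2 + e.2.2)%R in
     let dw := vpt R e.2 - vpt R e.1 in
     ((m z * dw) *: psi z + (ms z * dw^*) *: psis z).

Definition gamma (a b : int) (y : int) : seq (int * int) :=
  [seq (a + k%:Z, y)%R | k <- iota 0 (absz (b - a)).+1].

From mathcomp Require Import all_boot all_order all_algebra.
From mathcomp Require Import reals sequences exp complex.
From mathcomp Require Import ring zify.
Set Implicit Arguments.
Unset Strict Implicit.
Unset Printing Implicit Defensive.
Import GRing.Theory Num.Theory.
Local Open Scope ring_scope.

(* The integral along gamma_y is the sum of the terms m psi + m^* psi^* over the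
   horizontal edges of row y.  Between rows y and y + 1 the difference
   telescopes over the faces of the strip: at each corner of a face, ICSH for
   (m, m^* ) and s-holomorphicity for (psi, psi^* ) hold with the same factor
   lambda, so the product (m - lambda m^* )(psi + lambda psi^* ) takes the same
   value on both edges at the corner, and a combination of these four corner
   identities is the discrete contour integral around the face, which therefore
   vanishes.  What is left are vertical-edge terms on the two boundary columns,
   killed by ICRBV and the boundary conditions of the fermions. *)

Section FaceCirculation.
Variables (F : fieldType) (E : Type) (m ms x xs : E -> F).

Definition corner_rel (l : F) (e1 e2 : E) : Prop :=
  m e1 - l * ms e1 = m e2 - l * ms e2 /\ x e1 + l * xs e1 = x e2 + l * xs e2.

Definition corner_pairing (l : F) (e : E) : F := (m e - l * ms e) * (x e + l * xs e).

(* On a horizontal edge (dz = dz^* = +-1) the integrand m psi dz + m^* psi^* dz^*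
   is +- hflux; on a vertical edge (dz = - dz^* = +- i) it is +- i vflux. *)
Definition hflux (e : E) : F := m e * x e + ms e * xs e.
Definition vflux (e : E) : F := m e * x e - ms e * xs e.

Lemma corner_pairing_eq l e1 e2 :
  corner_rel l e1 e2 -> corner_pairing l e1 = corner_pairing l e2.
Proof. by case=> hm hx; rewrite /corner_pairing hm hx. Qed.

Lemma edge_pairing e l mu s : l * mu = s ->
  mu * corner_pairing l e - l * corner_pairing mu e
  = (mu - l) * (m e * x e + s * (ms e * xs e)).
Proof. by move=> <-; rewrite /corner_pairing; ring. Qed.

Variables (j t : F).
Hypotheses (hj : j ^+ 2 = -1) (ht : t ^+ 2 = j) (h2 : 2 != 0 :> F).

Lemma face_circulation eB eR eT eL :
  corner_rel (j * t) eR eB -> corner_rel t eR eT ->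
  corner_rel (- (j * t)) eL eT -> corner_rel (- t) eL eB ->
  hflux eB - hflux eT = j * vflux eL - j * vflux eR.
Proof.
move=> /corner_pairing_eq cBR /corner_pairing_eq cTR.
move=> /corner_pairing_eq cTL /corner_pairing_eq cBL.
have jtt : j * t * t = -1 by rewrite -mulrA -expr2 ht -expr2.
have pB : - t * (j * t) = 1 by rewrite mulNr mulrC jtt opprK.
have pT : t * - (j * t) = 1 by rewrite mulrN mulrC jtt opprK.
have pL : - (j * t) * - t = -1 by rewrite mulrNN.
have fB := edge_pairing eB pB; have fR := edge_pairing eR jtt.
have fT := edge_pairing eT pT; have fL := edge_pairing eL pL.
rewrite mul1r -/(hflux eB) in fB; rewrite mul1r -/(hflux eT) in fT.
rewrite mulN1r -/(vflux eR) in fR; rewrite mulN1r -/(vflux eL) in fL.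
have j_neq0 : j != 0.
  by apply: contra_eq_neq hj => ->; rewrite expr0n /= eq_sym oppr_eq0 oner_eq0.
have t_neq0 : t != 0 by apply: contra_neq j_neq0; rewrite -ht => ->; rewrite expr0n.
have j1_neq0 : 1 + j != 0.
  have : (1 + j) ^+ 2 = 2 * j by rewrite sqrrD hj; ring.
  by apply: contra_eq_neq => ->; rewrite expr0n /= eq_sym mulf_neq0.
suff : (1 + j) * t * (hflux eB - hflux eT - (j * vflux eL - j * vflux eR)) = 0.
  by move/eqP; rewrite mulf_eq0 (negPf (mulf_neq0 j1_neq0 t_neq0)) subr_eq0 => /eqP.
(* An alternating sum of the four edge identities, in which the corner
   pairings cancel in pairs. *)
transitivity ((j * t - - t) * hflux eB + (- (j * t) - t) * hflux eT
  - (- t - - (j * t)) * vflux eL - (t - j * t) * vflux eR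
  + (j ^+ 2 + 1) * t * (vflux eR - vflux eL)); first by ring.
rewrite hj addNr mul0r mul0r addr0 -fB -fR -fT -fL cBR cTR cTL cBL; ring.
Qed.
End FaceCirculation.

Local Open Scope complex_scope.

Section LatticeDirections.
Variable R : realType.

Lemma hptD (z w : int * int) : hpt R (z.1 + w.1, z.2 + w.2) = hpt R z + hpt R w.
Proof. by rewrite /hpt /= !intrD; simpc; rewrite !mulrDl. Qed.

Lemma hpt0 : hpt R (0, 0) = 0.
Proof. by rewrite /hpt /= !mul0r. Qed.

Lemma lam_shift_rot (p : int * int) (e1 e2 : int) (c : R[i]) :
  `|c| = 1 -> hpt R (e1, e2) = c * hpt R (1, 1) ->
  lam R (p.1 + e1, p.2 + e2) p = c^-1 * lam R (1, 1) (0, 0).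
Proof.
move=> c1 hc; rewrite /lam (hptD p (e1, e2)) addrC addKr hpt0 subr0 hc.
by rewrite normrM c1 mul1r invfM; ring.
Qed.

Lemma lam_diag_sqr : lam R (1, 1) (0, 0) ^+ 2 = 'i.
Proof.
rewrite /lam hpt0 subr0; set d := hpt R (1, 1).
have d_neq0 : d != 0 by apply/eqP; case=> /eqP; rewrite mulf_eq0 oner_eq0 invr_eq0 pnatr_eq0.
have dJ : d^* = - ('i * d) by rewrite /d /hpt /=; simpc.
rewrite expr_div_n exprMn sqr_normc dJ sqr_i mulN1r mulrN opprK mulrCA -expr2.
by rewrite mulfK // expf_neq0.
Qed.

Lemma lam_face_corners (X Y : int) (t := lam R (1, 1) (0, 0)) :
  [/\ lam R (X + 1, Y + 1) (X, Y) = t, lam R (X + 1, Y - 1) (X, Y) = 'i * t,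
       lam R (X - 1, Y + 1) (X, Y) = - ('i * t) & lam R (X - 1, Y - 1) (X, Y) = - t].
Proof.
have invi : 'i^-1 = - 'i :> R[i].
  by apply: mulr1_eq; rewrite mulrN -expr2 sqr_i opprK.
have lam_corner (e1 e2 : int) (c : R[i]) : hpt R (e1, e2) = c * hpt R (1, 1) -> `|c| = 1 ->
    lam R (X + e1, Y + e2) (X, Y) = c^-1 * t.
  by move=> hc c1; rewrite (lam_shift_rot (X, Y) c1 hc).
split.
- by rewrite (@lam_corner 1 1 1) ?invr1 ?mul1r ?normr1.
- by rewrite (@lam_corner 1 (-1) (- 'i)) ?invrN ?invi ?opprK ?normrN ?normCi // /hpt /=; simpc.
- rewrite (@lam_corner (-1) 1 'i) ?normCi //; last by rewrite /hpt /=; simpc.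
  by rewrite invi mulNr.
- by rewrite (@lam_corner (-1) (-1) (-1)) ?invrN1 ?mulN1r ?normrN1 // /hpt /=; simpc.
Qed.

End LatticeDirections.

Lemma zip_behead_map_iota (T : Type) (f : nat -> T) (i n : nat) :
  zip (map f (iota i n.+1)) (behead (map f (iota i n.+1))) =
  map (fun k => (f k, f k.+1)) (iota i n).
Proof. by elim: n i => [|n IHn] i //=; rewrite -IHn. Qed.

Lemma succ_invariant_const (T : Type) (f : int -> T) :
  (forall y, f (y + 1) = f y) -> forall y, f y = f 0.
Proof.
move=> hf; elim/int_rec => [//|k IHk|k IHk].
  by rewrite -IHk -[in RHS]hf; congr f; lia.
by rewrite -IHk -hf; congr f; lia.
Qed.

Section Strip.
Variables (R : realType) (a b : int) (psi psis : int * int -> Op R a b).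
Variables (m ms : int * int -> R[i]).

Definition hflux_mx (z : int * int) : Op R a b := m z *: psi z + ms z *: psis z.
Definition vflux_mx (z : int * int) : Op R a b := m z *: psi z - ms z *: psis z.

Definition row_sum (y : int) : Op R a b :=
  \sum_(0 <= k < absz (b - a)) hflux_mx (2 * a + 2 * k%:Z + 1, 2 * y).

Lemma cint_gamma y : cint m ms psi psis (gamma a b y) = row_sum y.
Proof.
rewrite /cint /gamma zip_behead_map_iota big_map /row_sum /index_iota subn0.
apply: eq_bigr => k _ /=.
have -> : vpt R (a + k.+1%:Z, y) - vpt R (a + k%:Z, y) = 1.
  rewrite /vpt /=; simpc; rewrite -intrB (_ : _ - _ = 1) //; lia.
rewrite conjC1 !mulr1 /hflux_mx.
by have -> : (a + k%:Z + (a + k.+1%:Z), y + y) = (2 * a + 2 * k%:Z + 1, 2 * y)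
  by congr pair; lia.
Qed.

Hypothesis Hpsi : is_fermion psi psis.
Hypothesis Hsh : ICSH a b m ms.
Hypothesis Hbv : ICRBV a b m ms.

Lemma corner_rel_face (X Y e1 e2 : int) (r c : 'I_(dimV a b)) :
  is_face a b (X, Y) -> `|e1| = 1 -> `|e2| = 1 ->
  corner_rel m ms (fun z => psi z r c) (fun z => psis z r c)
    (lam R (X + e1, Y + e2) (X, Y)) (X + e1, Y) (X, Y + e2).
Proof.
move=> p_face e1_unit e2_unit.
have /and4P[] := p_face; rewrite /= /oddz => X_gt X_lt X_odd Y_odd.
have e_hor : is_edge a b (X + e1, Y) by rewrite /is_edge /oddz /=; lia.
have e_ver : is_edge a b (X, Y + e2) by rewrite /is_edge /oddz /=; lia.
have v : is_vertex a b (X + e1, Y + e2) by rewrite /is_vertex /oddz /=; lia.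
have a1 : adj (X + e1, Y) (X + e1, Y + e2) by rewrite /adj /=; lia.
have a2 : adj (X + e1, Y) (X, Y) by rewrite /adj /=; lia.
have a3 : adj (X, Y + e2) (X + e1, Y + e2) by rewrite /adj /=; lia.
have a4 : adj (X, Y + e2) (X, Y) by rewrite /adj /=; lia.
split; first exact: Hsh.
have := Hpsi.2.1 _ _ _ _ e_hor e_ver v p_face a1 a2 a3 a4.
by move/matrixP/(_ r c); rewrite !mxE.
Qed.

Lemma face_flux_mx (X Y : int) : is_face a b (X, Y) ->
  hflux_mx (X, Y - 1) - hflux_mx (X, Y + 1)
  = 'i *: vflux_mx (X - 1, Y) - 'i *: vflux_mx (X + 1, Y).
Proof.
move=> p_face; have [lTR lBR lTL lBL] := lam_face_corners R X Y.
apply/matrixP => r c; rewrite /hflux_mx /vflux_mx !mxE.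
have corner e1 e2 := @corner_rel_face X Y e1 e2 r c p_face.
have two_neq0 : 2 != 0 :> R[i] by rewrite pnatr_eq0.
apply: (face_circulation (x := fun z => psi z r c) (xs := fun z => psis z r c)
  (sqr_i R) (lam_diag_sqr R) two_neq0).
- by rewrite -lBR; apply: corner.
- by rewrite -lTR; apply: corner.
- by rewrite -lTL; apply: corner.
- by rewrite -lBL; apply: corner.
Qed.

Lemma vflux_mx_eq0 (c : R[i]) z : c ^+ 2 = -1 ->
  m z = c * ms z -> psi z = - (c *: psis z) -> vflux_mx z = 0.
Proof.
rewrite /vflux_mx => hc -> ->; rewrite scalerN scalerA mulrAC -expr2 hc mulN1r.
by rewrite scaleNr opprK subrr.
Qed.

Lemma vflux_mx_left_bdry Y : oddz Y -> vflux_mx (2 * a, Y) = 0.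
Proof.
move=> Y_odd; have bd : left_bdry a b (2 * a, Y) by rewrite /left_bdry eqxx.
apply: (vflux_mx_eq0 (sqr_i R)); apply/eqP.
- by rewrite -subr_eq0; apply/eqP; exact: Hbv.1.
- by rewrite -addr_eq0; apply/eqP; exact: Hpsi.2.2.1.
Qed.

Lemma vflux_mx_right_bdry Y : oddz Y -> vflux_mx (2 * b, Y) = 0.
Proof.
move=> Y_odd; have bd : right_bdry a b (2 * b, Y) by rewrite /right_bdry eqxx.
apply: (@vflux_mx_eq0 (- 'i)); first by rewrite sqrrN sqr_i.
- by apply/eqP; rewrite mulNr -addr_eq0; apply/eqP; exact: Hbv.2.
- by apply/eqP; rewrite scaleNr opprK -subr_eq0; apply/eqP; exact: Hpsi.2.2.2.
Qed.

Hypothesis hab : a <= b.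

Lemma row_sum_succ y : row_sum (y + 1) = row_sum y.
Proof.
pose g k := 'i *: vflux_mx (2 * a + 2 * k%:Z, 2 * y + 1).
apply/eqP; rewrite eq_sym -subr_eq0 /row_sum -sumrB.
rewrite (telescope_sumr_eq (fun k => - g k)) //.
  rewrite /g (_ : 2 * a + 2 * (absz (b - a))%:Z = 2 * b); last by lia.
  by rewrite addr0 vflux_mx_left_bdry ?vflux_mx_right_bdry ?scaler0 ?subrr // /oddz; lia.
move=> k /andP[_ k_lt]; rewrite opprK [RHS]addrC /g.
set X := 2 * a + 2 * k%:Z + 1; set Y := 2 * y + 1.
have -> : (X, 2 * y) = (X, Y - 1) by congr pair; rewrite /Y; lia.
have -> : (X, 2 * (y + 1)) = (X, Y + 1) by congr pair; rewrite /Y; lia.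
have -> : 2 * a + 2 * k%:Z = X - 1 by rewrite /X; lia.
have -> : 2 * a + 2 * k.+1%:Z = X + 1 by rewrite /X; lia.
by apply: face_flux_mx; rewrite /is_face /X /Y /oddz /=; lia.
Qed.

End Strip.

Theorem proposition3p13 (R : realType) (a b : int) (ha : a < 0) (hb : 0 < b)
  (psi psis : int * int -> Op R a b) (Hpsi : is_fermion psi psis)
  (m ms : int * int -> R[i]) (Hsh : ICSH a b m ms) (Hbv : ICRBV a b m ms) :
  forall y : int,
    cint m ms psi psis (gamma a b y) = cint m ms psi psis (gamma a b 0).
Proof.
have hab : a <= b by lia.
move=> y; rewrite !cint_gamma.
exact: succ_invariant_const (row_sum_succ Hpsi Hsh Hbv hab) y.
Qed.
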